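(* In the setting described in the context, $$|\eta_h^{(2)}|-\gamma\le|J(u)-J(\tilde u)|\le|\eta_h^{(2)}|+\gamma,$$ where $$\gamma:=|J(u)-J(u_h^{(2)})|+|\mathcal{R}^{(3)}-\mathcal{R}^{(3)(2)}|+|\rho(\tilde u)(\tilde z)|+|\mathcal{R}^{(3)}|.$$
   Context: Let $U$ and $V$ be real Banach spaces with dual $V^*$. Let $\mathcal{A}:U\to V^*$ be a (nonlinear) operator that is three times continuously Fréchet differentiable, and let $J:U\to\mathbb{R}$ be three times continuously Fréchet differentiable. Notation: $\mathcal{A}(w)(v)$ is the value of $\mathcal{A}(w)\in V^*$ at $v\in V$. For fixed $v$, $\mathcal{A}'(w)(\varphi,v)$, $\mathcal{A}''(w)(\varphi,\psi,v)$ and $\mathcal{A}'''(w)(\varphi,\psi,\chi,v)$ denote the first, second and third Fréchet derivatives of $w\mapsto\mathcal{A}(w)(v)$ at $w$ in the directions $\varphi,\psi,\chi\in U$. Analogously, $J'(w)(\varphi)$ and $J'''(w)(\varphi,\psi,\chi)$ denote derivatives of $J$. Let $u\in U$ satisfy $\mathcal{A}(u)(v)=0$ for all $v\in V$, and let $z\in V$ satisfy $\mathcal{A}'(u)(\varphi,z)=J'(u)(\varphi)$ for all $\varphi\in U$. Let $U_h^{(2)}\subset U$ and $V_h^{(2)}\subset V$ be finite-dimensional subspaces. Let $u_h^{(2)}\in U_h^{(2)}$ satisfy $\mathcal{A}(u_h^{(2)})(v)=0$ for all $v\in V_h^{(2)}$. Let $z_h^{(2)}\in V_h^{(2)}$ satisfy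 $\mathcal{A}'(u_h^{(2)})(\varphi,z_h^{(2)})=J'(u_h^{(2)})(\varphi)$ for all $\varphi\in U_h^{(2)}$. Let $\tilde u\in U_h^{(2)}$ and $\tilde z\in V_h^{(2)}$ be arbitrary fixed elements. Define $\rho(\tilde u)(v):=-\mathcal{A}(\tilde u)(v)$ and $\rho^*(\tilde u,\tilde z)(\varphi):=J'(\tilde u)(\varphi)-\mathcal{A}'(\tilde u)(\varphi,\tilde z)$. With $e:=u-\tilde u$ and $e^*:=z-\tilde z$, define $$\mathcal{R}^{(3)}:=\frac12\int_0^1\Big[J'''(\tilde u+se)(e,e,e)-\mathcal{A}'''(\tilde u+se)(e,e,e,\tilde z+se^* )-3\mathcal{A}''(\tilde u+se)(e,e,e^* )\Big]s(s-1)\,ds.$$ Let $\mathcal{R}^{(3)(2)}$ be the same expression with $e,e^*,z$ replaced by $e^{(2)}:=u_h^{(2)}-\tilde u$, $e^{(2),*}:=z_h^{(2)}-\tilde z$, $z_h^{(2)}$. Define $\eta_h^{(2)}:=\tfrac12\rho(\tilde u)(z_h^{(2)}-\tilde z)+\tfrac12\rho^*(\tilde u,\tilde z)(u_h^{(2)}-\tilde u)$. *)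

From Stdlib Require Import Reals List.
From Coquelicot Require Import Coquelicot.
Open Scope R_scope.

Section Defs.
Context {U V : CompleteNormedModule R_AbsRing}.

Definition lin_comb {X : ModuleSpace R_Ring} (cs : list R) (l : list X) : X :=
  fold_right (fun p acc => plus (scal (fst p) (snd p)) acc) zero (combine cs l).

Definition in_span {X : ModuleSpace R_Ring} (l : list X) (x : X) : Prop :=
  exists cs : list R, length cs = length l /\ x = lin_comb cs l.

Definition FinDimSubspace {X : ModuleSpace R_Ring} (S : X -> Prop) : Prop :=
  exists l : list X, forall x, S x <-> in_span l x.

Definition LinU (f : U -> R) : Prop :=
  forall (a : R) (x y : U), f (plus (scal a x) y) = a * f x + f y.
Definition LinV (f : V -> R) : Prop :=
  forall (a : R) (x y : V), f (plus (scal a x) y) = a * f x + f y.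

(* ---------- bounded multilinear forms U^k x V -> R ----------
   (elements of V^dual, L(U,V^dual), L(U,L(U,V^dual)), L(U,L(U,L(U,V^dual))),
    identified isometrically with bounded multilinear forms) *)
Definition bndV0 (g : V -> R) (c : R) : Prop :=
  forall v, Rabs (g v) <= c * norm v.
Definition bndV1 (g : U -> V -> R) (c : R) : Prop :=
  forall h v, Rabs (g h v) <= c * norm h * norm v.
Definition bndV2 (g : U -> U -> V -> R) (c : R) : Prop :=
  forall h k v, Rabs (g h k v) <= c * norm h * norm k * norm v.
Definition bndV3 (g : U -> U -> U -> V -> R) (c : R) : Prop :=
  forall h k l v, Rabs (g h k l v) <= c * norm h * norm k * norm l * norm v.

Definition formV0 (g : V -> R) : Prop := LinV g /\ exists C, bndV0 g C.
Definition formV1 (g : U -> V -> R) : Prop :=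
  (forall h, LinV (g h)) /\ (forall v, LinU (fun h => g h v)) /\ exists C, bndV1 g C.
Definition formV2 (g : U -> U -> V -> R) : Prop :=
  (forall h k, LinV (g h k)) /\ (forall k v, LinU (fun h => g h k v)) /\
  (forall h v, LinU (fun k => g h k v)) /\ exists C, bndV2 g C.
Definition formV3 (g : U -> U -> U -> V -> R) : Prop :=
  (forall h k l, LinV (g h k l)) /\ (forall k l v, LinU (fun h => g h k l v)) /\
  (forall h l v, LinU (fun k => g h k l v)) /\ (forall h k v, LinU (fun l => g h k l v)) /\
  exists C, bndV3 g C.

(* A : U -> V^dual three times continuously Frechet differentiable, with
   A1 = A', A2 = A'', A3 = A''' (derivatives w.r.t. the operator norms). *)
Definition OperatorC3 (A : U -> V -> R) (A1 : U -> U -> V -> R)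
  (A2 : U -> U -> U -> V -> R) (A3 : U -> U -> U -> U -> V -> R) : Prop :=
  (forall w, formV0 (A w)) /\ (forall w, formV1 (A1 w)) /\
  (forall w, formV2 (A2 w)) /\ (forall w, formV3 (A3 w)) /\
  (forall w (eps : R), 0 < eps -> exists delta, 0 < delta /\ forall h, norm h < delta ->
     bndV0 (fun v => A (plus w h) v - A w v - A1 w h v) (eps * norm h)) /\
  (forall w (eps : R), 0 < eps -> exists delta, 0 < delta /\ forall h, norm h < delta ->
     bndV1 (fun k v => A1 (plus w h) k v - A1 w k v - A2 w h k v) (eps * norm h)) /\
  (forall w (eps : R), 0 < eps -> exists delta, 0 < delta /\ forall h, norm h < delta ->
     bndV2 (fun k l v => A2 (plus w h) k l v - A2 w k l v - A3 w h k l v) (eps * norm h)) /\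
  (forall w (eps : R), 0 < eps -> exists delta, 0 < delta /\ forall w', norm (minus w' w) < delta ->
     bndV3 (fun h k l v => A3 w' h k l v - A3 w h k l v) eps).

Definition bnd1 (g : U -> R) (c : R) : Prop := forall h, Rabs (g h) <= c * norm h.
Definition bnd2 (g : U -> U -> R) (c : R) : Prop :=
  forall h k, Rabs (g h k) <= c * norm h * norm k.
Definition bnd3 (g : U -> U -> U -> R) (c : R) : Prop :=
  forall h k l, Rabs (g h k l) <= c * norm h * norm k * norm l.

Definition form1 (g : U -> R) : Prop := LinU g /\ exists C, bnd1 g C.
Definition form2 (g : U -> U -> R) : Prop :=
  (forall h, LinU (g h)) /\ (forall k, LinU (fun h => g h k)) /\ exists C, bnd2 g C.
Definition form3 (g : U -> U -> U -> R) : Prop :=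
  (forall h k, LinU (g h k)) /\ (forall h l, LinU (fun k => g h k l)) /\
  (forall k l, LinU (fun h => g h k l)) /\ exists C, bnd3 g C.

Definition FunctionalC3 (J : U -> R) (J1 : U -> U -> R) (J2 : U -> U -> U -> R)
  (J3 : U -> U -> U -> U -> R) : Prop :=
  (forall w, form1 (J1 w)) /\ (forall w, form2 (J2 w)) /\ (forall w, form3 (J3 w)) /\
  (forall w (eps : R), 0 < eps -> exists delta, 0 < delta /\ forall h, norm h < delta ->
     Rabs (J (plus w h) - J w - J1 w h) <= eps * norm h) /\
  (forall w (eps : R), 0 < eps -> exists delta, 0 < delta /\ forall h, norm h < delta ->
     bnd1 (fun k => J1 (plus w h) k - J1 w k - J2 w h k) (eps * norm h)) /\
  (forall w (eps : R), 0 < eps -> exists delta, 0 < delta /\ forall h, norm h < delta ->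
     bnd2 (fun k l => J2 (plus w h) k l - J2 w k l - J3 w h k l) (eps * norm h)) /\
  (forall w (eps : R), 0 < eps -> exists delta, 0 < delta /\ forall w', norm (minus w' w) < delta ->
     bnd3 (fun h k l => J3 w' h k l - J3 w h k l) eps).

Definition rho (A : U -> V -> R) (ut : U) (v : V) : R := - A ut v.
Definition rhostar (J1 : U -> U -> R) (A1 : U -> U -> V -> R) (ut : U) (zt : V) (phi : U) : R :=
  J1 ut phi - A1 ut phi zt.

Definition R3 (J3 : U -> U -> U -> U -> R) (A2 : U -> U -> U -> V -> R)
  (A3 : U -> U -> U -> U -> V -> R) (ut : U) (zt : V) (u : U) (z : V) : R :=
  let e := minus u ut in
  let es := minus z zt in
  1/2 * RInt (fun s =>
     (J3 (plus ut (scal s e)) e e e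
      - A3 (plus ut (scal s e)) e e e (plus zt (scal s es))
      - 3 * A2 (plus ut (scal s e)) e e es) * (s * (s - 1))) 0 1.

End Defs.

From Stdlib Require Import Reals List Lra.
From Coquelicot Require Import Coquelicot.
Open Scope R_scope.

(* Along the segment s |-> (ut + s e, zt + s es), with e = uh - ut and es = zh - zt,
   let L(s) be the Lagrangian J(u) - A(u)(z).  Since s(s-1)/2 is the Peano kernel of the
   trapezoidal rule, L(1) - L(0) = (L'(0) + L'(1))/2 + R3^(2), whose integrand is L'''.
   Galerkin orthogonality of (uh, zh) gives L(1) = J(uh) and L'(1) = 0, while
   L(0) = J(ut) + rho(ut)(zt) and L'(0)/2 = eta.  Hence
   J(uh) - J(ut) = eta + rho(ut)(zt) + R3^(2), and the two-sided bound is the triangle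
   inequality with |R3^(2)| <= |R3 - R3^(2)| + |R3|. *)

Lemma RInt_trapezoid_error (f f' f'' f''' : R -> R) :
  (forall x, is_derive f x (f' x)) -> (forall x, is_derive f' x (f'' x)) ->
  (forall x, is_derive f'' x (f''' x)) -> (forall x, continuous f''' x) ->
  RInt (fun s => f''' s * (s * (s - 1))) 0 1 = 2 * (f 1 - f 0) - (f' 0 + f' 1).
Proof.
  intros d0 d1 d2 c3.
  (* an antiderivative of the integrand, from two integrations by parts *)
  set (F := fun s => f'' s * (s * (s - 1)) - f' s * (2 * s - 1) + 2 * f s).
  assert (HF : forall x, is_derive F x (f''' x * (x * (x - 1)))).
  { intro x; unfold F; auto_derive.
    - repeat split; eexists; eauto.
    - replace (Derive (fun s : R => f s) x) with (f' x)
        by (symmetry; apply is_derive_unique, d0).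
      replace (Derive (fun s : R => f' s) x) with (f'' x)
        by (symmetry; apply is_derive_unique, d1).
      replace (Derive (fun s : R => f'' s) x) with (f''' x)
        by (symmetry; apply is_derive_unique, d2).
      ring. }
  assert (Hc : forall x, continuous (fun s => f''' s * (s * (s - 1))) x).
  { intro x; apply (continuous_mult f''' (fun s => s * (s - 1))); [apply c3 |].
    apply (ex_derive_continuous (fun s => s * (s - 1))); auto_derive; easy. }
  rewrite (is_RInt_unique _ _ _ _
    (is_RInt_derive F _ 0 1 (fun x _ => HF x) (fun x _ => Hc x))).
  unfold F, minus, plus, opp; simpl; ring.
Qed.

Lemma is_derive_value (f : R -> R) (x l l' : R) : is_derive f x l -> l = l' -> is_derive f x l'.
Proof. intros Hf <-; exact Hf. Qed.

Lemma is_derive_Rminus (f g : R -> R) (x a b : R) :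
  is_derive f x a -> is_derive g x b -> is_derive (fun s => f s - g s) x (a - b).
Proof. exact (is_derive_minus f g x a b). Qed.

Section LinearForm.
Context {X : ModuleSpace R_Ring}.

Definition linear_form (f : X -> R) : Prop :=
  forall (a : R) (x y : X), f (plus (scal a x) y) = a * f x + f y.

Variables (f : X -> R) (Hf : linear_form f).

Lemma linear_form_zero : f zero = 0.
Proof.
  pose proof (Hf 1 zero zero) as H; rewrite scal_zero_r, plus_zero_r in H.
  change (f zero = 1 * f zero + f zero) in H; lra.
Qed.

Lemma linear_form_scal a x : f (scal a x) = a * f x.
Proof. rewrite <- (plus_zero_r (scal a x)), Hf, linear_form_zero; ring. Qed.

Lemma linear_form_plus x y : f (plus x y) = f x + f y.
Proof. rewrite <- (scal_one x) at 1; rewrite Hf; unfold one; simpl; ring. Qed.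

Lemma linear_form_minus x y : f (minus x y) = f x - f y.
Proof.
  unfold minus; rewrite linear_form_plus, <- scal_opp_one, linear_form_scal.
  unfold opp, one; simpl; ring.
Qed.

End LinearForm.

Section Segment.
Context {X : ModuleSpace R_Ring}.

Lemma segment_0 (a d : X) : plus a (scal 0 d) = a.
Proof. rewrite <- (plus_zero_r a) at 2; f_equal; exact (scal_zero_l d). Qed.

Lemma segment_1 (a b : X) : plus a (scal 1 (minus b a)) = b.
Proof.
  rewrite (scal_one (minus b a) : scal 1 _ = _); unfold minus.
  rewrite plus_comm, <- plus_assoc, (@plus_opp_l (ModuleSpace.AbelianGroup _ X)).
  apply plus_zero_r.
Qed.

End Segment.

Section FormOnSegment.
Context {X : ModuleSpace R_Ring}.
Variables (G : R -> X -> R) (b d : X) (x : R).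
Hypothesis HG : forall s, linear_form (G s).

Lemma form_on_segment s : G s (plus b (scal s d)) = G s b + s * G s d.
Proof. rewrite plus_comm, (HG s); ring. Qed.

Lemma is_derive_form_on_segment (G' : X -> R) :
  linear_form G' -> (forall v, is_derive (fun s => G s v) x (G' v)) ->
  is_derive (fun s => G s (plus b (scal s d))) x (G' (plus b (scal x d)) + G x d).
Proof.
  intros HG' dG.
  apply (is_derive_ext (fun s => G s b + s * G s d) (fun s => G s (plus b (scal s d))));
    [intro s; symmetry; apply form_on_segment |].
  pose proof (is_derive_mult (fun s => s) (fun s => G s d) x _ _
    (is_derive_id x) (dG d) Rmult_comm) as Hmult.
  apply (is_derive_value _ _ _ _ (is_derive_plus (fun s => G s b) _ x _ _ (dG b) Hmult)).
  rewrite (linear_form_plus G' HG'), (linear_form_scal G' HG').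
  change (G' b + (1 * G x d + x * G' d) = G' b + x * G' d + G x d); ring.
Qed.

Lemma continuous_form_on_segment :
  (forall v, continuous (fun s => G s v) x) -> continuous (fun s => G s (plus b (scal s d))) x.
Proof.
  intros cG.
  apply (continuous_ext (fun s => G s b + s * G s d) (fun s => G s (plus b (scal s d))));
    [intro s; symmetry; apply form_on_segment |].
  apply (continuous_plus (fun s => G s b) (fun s => s * G s d)); [apply cG |].
  apply (continuous_mult (fun s => s) (fun s => G s d)); [apply continuous_id | apply cG].
Qed.

End FormOnSegment.

Section AlongLine.
Context {U : NormedModule R_AbsRing}.

Lemma is_derive_along_line (F F' : U -> R) (a d : U) (x K : R) :
  0 <= K -> (forall (c : R) h, F' (scal c h) = c * F' h) ->
  (forall eps, 0 < eps -> exists delta, 0 < delta /\ forall h, norm h < delta ->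
     Rabs (F (plus (plus a (scal x d)) h) - F (plus a (scal x d)) - F' h)
       <= eps * norm h * K) ->
  is_derive (fun s : R => F (plus a (scal s d))) x (F' d).
Proof.
  intros HK Hhom Hrem; split; [apply is_linear_scal_l |].
  intros y Hy eps; apply (@is_filter_lim_locally_unique _ R_NormedModule) in Hy; subst y.
  set (w := plus a (scal x d)).
  pose proof (norm_ge_0 d) as Hd.
  set (c := eps / (norm d * K + 1)).
  assert (Hc : 0 < c) by (apply Rdiv_lt_0_compat; [apply cond_pos | nra]).
  assert (Hc_le : c * (norm d * K) <= eps).
  { assert (c * (norm d * K + 1) = eps) by (unfold c; field; nra). nra. }
  destruct (Hrem c Hc) as (delta & Hdelta & Hbound).
  assert (Hdelta' : 0 < delta / (norm d + 1)) by (apply Rdiv_lt_0_compat; lra).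
  (* [y] arrives typed over [R_AbsRing]; retype it so that [scal y d] elaborates as in [w]. *)
  exists (mkposreal _ Hdelta'); intros y Hy; change R in y.
  change (Rabs (y - x) < delta / (norm d + 1)) in Hy.
  change (Rabs (F (plus a (scal y d)) - F w - (y - x) * F' d) <= eps * Rabs (y - x)).
  assert (Hshift : plus w (scal (y - x) d) = plus a (scal y d)).
  { unfold w; rewrite <- plus_assoc; f_equal.
    transitivity (scal (x + (y - x)) d); [symmetry; exact (scal_distr_r x (y - x) d) |].
    replace (x + (y - x)) with y by ring; reflexivity. }
  rewrite <- Hshift; set (h := y - x) in *.
  assert (Hh : norm (scal h d) <= Rabs h * norm d) by exact (norm_scal h d).
  assert (Hhd : Rabs h * (norm d + 1) < delta).
  { apply (Rmult_lt_compat_r (norm d + 1)) in Hy; [| lra].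
    unfold Rdiv in Hy; rewrite Rmult_assoc, Rinv_l in Hy; lra. }
  pose proof (Rabs_pos h).
  specialize (Hbound (scal h d) ltac:(nra)); rewrite Hhom in Hbound.
  apply (Rle_trans _ _ _ Hbound).
  assert (c * norm (scal h d) * K <= c * (Rabs h * norm d) * K).
  { apply Rmult_le_compat_r; [exact HK |]. apply Rmult_le_compat_l; lra. }
  nra.
Qed.

Lemma continuous_along_line (G : U -> R) (a d : U) (x K : R) :
  (forall eps, 0 < eps -> exists delta, 0 < delta /\
     forall v, norm (minus v (plus a (scal x d))) < delta ->
     Rabs (G v - G (plus a (scal x d))) <= eps * K) ->
  continuous (fun s : R => G (plus a (scal s d))) x.
Proof.
  intros Hcont; apply (continuous_comp (fun s : R => plus a (scal s d)) G).
  { apply (continuous_plus (fun _ => a) (fun s : R => scal s d)); [apply continuous_const |].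
    apply (continuous_scal_l (fun s : R => s) d), continuous_id. }
  apply filterlim_locally; intros eps; apply locally_le_locally_norm.
  set (c := eps / (Rabs K + 1)).
  pose proof (Rabs_pos K).
  assert (Hc : 0 < c) by (apply Rdiv_lt_0_compat; [apply cond_pos | lra]).
  assert (Hc_lt : c * K < eps).
  { assert (c * (Rabs K + 1) = eps) by (unfold c; field; lra).
    pose proof (Rle_abs K); nra. }
  destruct (Hcont c Hc) as (delta & Hdelta & Hbound).
  exists (mkposreal _ Hdelta); intros v Hv.
  apply (Rle_lt_trans _ _ _ (Hbound v Hv) Hc_lt).
Qed.

End AlongLine.

Section LagrangianOnSegment.
Context {U V : CompleteNormedModule R_AbsRing}.
Variables (A : U -> V -> R) (A1 : U -> U -> V -> R) (A2 : U -> U -> U -> V -> R)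
  (A3 : U -> U -> U -> U -> V -> R)
  (J : U -> R) (J1 : U -> U -> R) (J2 : U -> U -> U -> R) (J3 : U -> U -> U -> U -> R).
Hypotheses (HA : OperatorC3 A A1 A2 A3) (HJ : FunctionalC3 J J1 J2 J3).
Variables (ut e : U) (zt es : V).

Local Notation us s := (plus ut (scal s e)).
Local Notation zs s := (plus zt (scal s es)).

Definition lagr (s : R) : R := J (us s) - A (us s) (zs s).
Definition lagr' (s : R) : R := J1 (us s) e - A1 (us s) e (zs s) - A (us s) es.
Definition lagr'' (s : R) : R :=
  J2 (us s) e e - A2 (us s) e e (zs s) - 2 * A1 (us s) e es.
Definition lagr''' (s : R) : R :=
  J3 (us s) e e e - A3 (us s) e e e (zs s) - 3 * A2 (us s) e e es.

Lemma is_derive_J_segment x : is_derive (fun s : R => J (us s)) x (J1 (us x) e).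
Proof.
  destruct HJ as (HJ1 & _ & _ & DJ & _).
  apply (is_derive_along_line J (J1 (us x)) ut e x 1);
    [lra | intros c h; exact (linear_form_scal _ (proj1 (HJ1 _)) c h) |].
  intros eps Heps; destruct (DJ (us x) eps Heps) as (delta & Hdelta & Hb).
  exists delta; split; [exact Hdelta |]; intros h Hh; rewrite Rmult_1_r; exact (Hb h Hh).
Qed.

Lemma is_derive_J1_segment x : is_derive (fun s : R => J1 (us s) e) x (J2 (us x) e e).
Proof.
  destruct HJ as (_ & HJ2 & _ & _ & DJ1 & _).
  apply (is_derive_along_line (fun w => J1 w e) (fun h => J2 (us x) h e) ut e x (norm e));
    [apply norm_ge_0
    | intros c h; exact (linear_form_scal _ (proj1 (proj2 (HJ2 _)) e) c h) |].
  intros eps Heps; destruct (DJ1 (us x) eps Heps) as (delta & Hdelta & Hb).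
  exists delta; split; [exact Hdelta |]; intros h Hh; exact (Hb h Hh e).
Qed.

Lemma is_derive_J2_segment x : is_derive (fun s : R => J2 (us s) e e) x (J3 (us x) e e e).
Proof.
  destruct HJ as (_ & _ & HJ3 & _ & _ & DJ2 & _).
  apply (is_derive_along_line (fun w => J2 w e e) (fun h => J3 (us x) h e e) ut e x
           (norm e * norm e));
    [apply Rmult_le_pos; apply norm_ge_0
    | intros c h; exact (linear_form_scal _ (proj1 (proj2 (proj2 (HJ3 _))) e e) c h) |].
  intros eps Heps; destruct (DJ2 (us x) eps Heps) as (delta & Hdelta & Hb).
  exists delta; split; [exact Hdelta |]; intros h Hh.
  rewrite <- Rmult_assoc; exact (Hb h Hh e e).
Qed.

Lemma continuous_J3_segment x : continuous (fun s : R => J3 (us s) e e e) x.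
Proof.
  destruct HJ as (_ & _ & _ & _ & _ & _ & CJ3).
  apply (continuous_along_line (fun w => J3 w e e e) ut e x (norm e * norm e * norm e)).
  intros eps Heps; destruct (CJ3 (us x) eps Heps) as (delta & Hdelta & Hb).
  exists delta; split; [exact Hdelta |]; intros w Hw.
  rewrite <- !Rmult_assoc; exact (Hb w Hw e e e).
Qed.

Lemma is_derive_A_segment v x : is_derive (fun s : R => A (us s) v) x (A1 (us x) e v).
Proof.
  destruct HA as (_ & HA1 & _ & _ & DA & _).
  apply (is_derive_along_line (fun w => A w v) (fun h => A1 (us x) h v) ut e x (norm v));
    [apply norm_ge_0
    | intros c h; exact (linear_form_scal _ (proj1 (proj2 (HA1 _)) v) c h) |].
  intros eps Heps; destruct (DA (us x) eps Heps) as (delta & Hdelta & Hb).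
  exists delta; split; [exact Hdelta |]; intros h Hh; exact (Hb h Hh v).
Qed.

Lemma is_derive_A1_segment v x :
  is_derive (fun s : R => A1 (us s) e v) x (A2 (us x) e e v).
Proof.
  destruct HA as (_ & _ & HA2 & _ & _ & DA1 & _).
  apply (is_derive_along_line (fun w => A1 w e v) (fun h => A2 (us x) h e v) ut e x
           (norm e * norm v));
    [apply Rmult_le_pos; apply norm_ge_0
    | intros c h; exact (linear_form_scal _ (proj1 (proj2 (HA2 _)) e v) c h) |].
  intros eps Heps; destruct (DA1 (us x) eps Heps) as (delta & Hdelta & Hb).
  exists delta; split; [exact Hdelta |]; intros h Hh.
  rewrite <- Rmult_assoc; exact (Hb h Hh e v).
Qed.

Lemma is_derive_A2_segment v x :
  is_derive (fun s : R => A2 (us s) e e v) x (A3 (us x) e e e v).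
Proof.
  destruct HA as (_ & _ & _ & HA3 & _ & _ & DA2 & _).
  apply (is_derive_along_line (fun w => A2 w e e v) (fun h => A3 (us x) h e e v) ut e x
           (norm e * norm e * norm v));
    [repeat apply Rmult_le_pos; apply norm_ge_0
    | intros c h; exact (linear_form_scal _ (proj1 (proj2 (HA3 _)) e e v) c h) |].
  intros eps Heps; destruct (DA2 (us x) eps Heps) as (delta & Hdelta & Hb).
  exists delta; split; [exact Hdelta |]; intros h Hh.
  rewrite <- !Rmult_assoc; exact (Hb h Hh e e v).
Qed.

Lemma continuous_A3_segment v x : continuous (fun s : R => A3 (us s) e e e v) x.
Proof.
  destruct HA as (_ & _ & _ & _ & _ & _ & _ & CA3).
  apply (continuous_along_line (fun w => A3 w e e e v) ut e x
           (norm e * norm e * norm e * norm v)).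
  intros eps Heps; destruct (CA3 (us x) eps Heps) as (delta & Hdelta & Hb).
  exists delta; split; [exact Hdelta |]; intros w Hw.
  rewrite <- !Rmult_assoc; exact (Hb w Hw e e e v).
Qed.

Lemma is_derive_lagr (x : R) : is_derive lagr x (lagr' x).
Proof.
  destruct HA as (HA0 & HA1 & _).
  apply (is_derive_value _ _ _ _ (is_derive_Rminus _ _ x _ _ (is_derive_J_segment x)
    (is_derive_form_on_segment (fun s => A (us s)) zt es x (fun s => proj1 (HA0 _)) _
       (proj1 (HA1 _) e) (fun v => is_derive_A_segment v x)))).
  change (J1 (us x) e - (A1 (us x) e (zs x) + A (us x) es) = lagr' x).
  unfold lagr'; ring.
Qed.

Lemma is_derive_lagr' (x : R) : is_derive lagr' x (lagr'' x).
Proof.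
  destruct HA as (_ & HA1 & HA2 & _).
  apply (is_derive_value _ _ _ _ (is_derive_Rminus _ _ x _ _
    (is_derive_Rminus _ _ x _ _ (is_derive_J1_segment x)
      (is_derive_form_on_segment (fun s => A1 (us s) e) zt es x (fun s => proj1 (HA1 _) e) _
         (proj1 (HA2 _) e e) (fun v => is_derive_A1_segment v x)))
    (is_derive_A_segment es x))).
  change (J2 (us x) e e - (A2 (us x) e e (zs x) + A1 (us x) e es) - A1 (us x) e es = lagr'' x).
  unfold lagr''; ring.
Qed.

Lemma is_derive_lagr'' (x : R) : is_derive lagr'' x (lagr''' x).
Proof.
  destruct HA as (_ & _ & HA2 & HA3 & _).
  apply (is_derive_value _ _ _ _ (is_derive_Rminus _ _ x _ _
    (is_derive_Rminus _ _ x _ _ (is_derive_J2_segment x)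
      (is_derive_form_on_segment (fun s => A2 (us s) e e) zt es x
         (fun s => proj1 (HA2 _) e e) _ (proj1 (HA3 _) e e e)
         (fun v => is_derive_A2_segment v x)))
    (is_derive_scal _ x 2 _ (is_derive_A1_segment es x)))).
  change (J3 (us x) e e e - (A3 (us x) e e e (zs x) + A2 (us x) e e es) - 2 * A2 (us x) e e es
          = lagr''' x).
  unfold lagr'''; ring.
Qed.

Lemma continuous_lagr''' (x : R) : continuous lagr''' x.
Proof.
  destruct HA as (_ & _ & _ & HA3 & _).
  apply (continuous_minus (fun s : R => J3 (us s) e e e - A3 (us s) e e e (zs s))
                          (fun s : R => 3 * A2 (us s) e e es)).
  - apply (continuous_minus (fun s : R => J3 (us s) e e e)
                            (fun s : R => A3 (us s) e e e (zs s))).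
    + apply continuous_J3_segment.
    + apply (continuous_form_on_segment (fun s : R => A3 (us s) e e e));
        [intro s; exact (proj1 (HA3 _) e e e) | intro v; apply continuous_A3_segment].
  - apply (continuous_scal_r 3 (fun s : R => A2 (us s) e e es)), ex_derive_continuous.
    eexists; apply is_derive_A2_segment.
Qed.

Lemma RInt_lagr''' :
  RInt (fun s => lagr''' s * (s * (s - 1))) 0 1 = 2 * (lagr 1 - lagr 0) - (lagr' 0 + lagr' 1).
Proof.
  apply (RInt_trapezoid_error lagr lagr' lagr'' lagr''').
  - apply is_derive_lagr.
  - apply is_derive_lagr'.
  - apply is_derive_lagr''.
  - apply continuous_lagr'''.
Qed.

End LagrangianOnSegment.

Lemma discrete_error_representation {U V : CompleteNormedModule R_AbsRing}
  (A : U -> V -> R) (A1 : U -> U -> V -> R) (A2 : U -> U -> U -> V -> R)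
  (A3 : U -> U -> U -> U -> V -> R)
  (J : U -> R) (J1 : U -> U -> R) (J2 : U -> U -> U -> R) (J3 : U -> U -> U -> U -> R)
  (HA : OperatorC3 A A1 A2 A3) (HJ : FunctionalC3 J J1 J2 J3)
  (uh ut : U) (zh zt : V)
  (HAzh : A uh zh = 0) (HAzt : A uh zt = 0)
  (Huh : A1 uh uh zh = J1 uh uh) (Hut : A1 uh ut zh = J1 uh ut) :
  J uh - J ut = 1/2 * rho A ut (minus zh zt) + 1/2 * rhostar J1 A1 ut zt (minus uh ut)
                + rho A ut zt + R3 J3 A2 A3 ut zt uh zh.
Proof.
  pose proof HA as (HA0 & HA1 & _); pose proof HJ as (HJ1 & _).
  change (R3 J3 A2 A3 ut zt uh zh) with
    (1/2 * RInt (fun s => lagr''' A2 A3 J3 ut (minus uh ut) zt (minus zh zt) s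
                          * (s * (s - 1))) 0 1).
  rewrite (RInt_lagr''' A A1 A2 A3 J J1 J2 J3 HA HJ); unfold lagr, lagr'.
  assert (Hu0 : plus ut (scal 0 (minus uh ut)) = ut) by exact (segment_0 ut _).
  assert (Hz0 : plus zt (scal 0 (minus zh zt)) = zt) by exact (segment_0 zt _).
  assert (Hu1 : plus ut (scal 1 (minus uh ut)) = uh) by exact (segment_1 ut uh).
  assert (Hz1 : plus zt (scal 1 (minus zh zt)) = zh) by exact (segment_1 zt zh).
  rewrite Hu0, Hz0, Hu1, Hz1.
  assert (HAes : A uh (minus zh zt) = A uh zh - A uh zt)
    by exact (linear_form_minus _ (proj1 (HA0 uh)) zh zt).
  assert (HJe : J1 uh (minus uh ut) = J1 uh uh - J1 uh ut)
    by exact (linear_form_minus _ (proj1 (HJ1 uh)) uh ut).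
  assert (HA1e : A1 uh (minus uh ut) zh = A1 uh uh zh - A1 uh ut zh)
    by exact (linear_form_minus _ (proj1 (proj2 (HA1 uh)) zh) uh ut).
  unfold rho, rhostar; lra.
Qed.

Lemma Rabs_bounds_of_dist_le (x y r : R) :
  Rabs (x - y) <= r -> Rabs y - r <= Rabs x <= Rabs y + r.
Proof. intros H; split_Rabs; lra. Qed.

Theorem mainTheorem8
  (U V : CompleteNormedModule R_AbsRing)
  (A : U -> V -> R) (A1 : U -> U -> V -> R) (A2 : U -> U -> U -> V -> R)
  (A3 : U -> U -> U -> U -> V -> R)
  (J : U -> R) (J1 : U -> U -> R) (J2 : U -> U -> U -> R) (J3 : U -> U -> U -> U -> R)
  (HA : OperatorC3 A A1 A2 A3) (HJ : FunctionalC3 J J1 J2 J3)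
  (u : U) (z : V)
  (Hu : forall v : V, A u v = 0)
  (Hz : forall phi : U, A1 u phi z = J1 u phi)
  (Uh : U -> Prop) (Vh : V -> Prop)
  (HUh : FinDimSubspace Uh) (HVh : FinDimSubspace Vh)
  (uh : U) (zh : V) (Huh : Uh uh) (Hzh : Vh zh)
  (Huh_eq : forall v : V, Vh v -> A uh v = 0)
  (Hzh_eq : forall phi : U, Uh phi -> A1 uh phi zh = J1 uh phi)
  (ut : U) (zt : V) (Hut : Uh ut) (Hzt : Vh zt) :
  let eta := 1/2 * rho A ut (minus zh zt) + 1/2 * rhostar J1 A1 ut zt (minus uh ut) in
  let gamma := Rabs (J u - J uh) + Rabs (R3 J3 A2 A3 ut zt u z - R3 J3 A2 A3 ut zt uh zh)
               + Rabs (rho A ut zt) + Rabs (R3 J3 A2 A3 ut zt u z) in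
  Rabs eta - gamma <= Rabs (J u - J ut) <= Rabs eta + gamma.
Proof.
  intros eta gamma.
  pose proof (discrete_error_representation A A1 A2 A3 J J1 J2 J3 HA HJ uh ut zh zt
    (Huh_eq zh Hzh) (Huh_eq zt Hzt) (Hzh_eq uh Huh) (Hzh_eq ut Hut)) as Hrep.
  fold eta in Hrep.
  apply Rabs_bounds_of_dist_le; unfold gamma; split_Rabs; lra.
Qed.
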